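(* Let $G$ be a finite, connected, simple, bridgeless, triangle-free cubic graph, let $\Lambda$ be a valid labeling of $\mathfrak{L}_2(G)$, and let $\gamma_1,\gamma_2\in\Gamma_\Lambda$ be non-adjacent cycles. Then there are finitely many reduced cliques $\mathbb{X}_1,\dots,\mathbb{X}_n\in\mathcal{X}$ such that, with $\Lambda'=(\mathcal{F}_{\mathbb{X}_1}\circ\cdots\circ\mathcal{F}_{\mathbb{X}_n})(\Lambda)$, we have $\gamma_1,\gamma_2\in\Gamma_{\Lambda'}$ and there is a cycle $\gamma_3\in\Gamma_{\Lambda'}$ adjacent to both $\gamma_1$ and $\gamma_2$.
   Context: $\mathcal{L}(H)$ is the line graph of $H$. Let $\mathcal{T}$ be the set of triangles of $\mathcal{L}(\mathcal{L}(G))$ formed by the three edges of a triangle of $\mathcal{L}(G)$. $\mathfrak{L}_2(G)$ has the vertex set of $\mathcal{L}(\mathcal{L}(G))$ and the edges of $\mathcal{L}(\mathcal{L}(G))$ not in any triangle of $\mathcal{T}$. For each edge $e$ of $G$, the reduced clique $\mathbb{X}_e$ is the subgraph of $\mathfrak{L}_2(G)$ on the four edges of $\mathcal{L}(G)$ incident to $e$, with all edges of $\mathfrak{L}_2(G)$ among them (a 4-cycle); $\mathcal{X}$ is the set of reduced cliques. A labeling $\Lambda$ gives each edge of $\mathfrak{L}_2(G)$ a label in $\{0,1\}$ ($1$ = open); it is valid if in every reduced clique each vertex is incident to two edges of that clique with different labels. $\Gamma_\Lambda$ is the set of connected components (cycles, viewed as subgraphs) of the subgraph formed by open edges. Two cycles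 $\gamma,\phi\in\Gamma_\Lambda$ are adjacent if some reduced clique contains an edge of $\gamma$ and an edge of $\phi$. The label inversion $\mathcal{F}_{\mathbb{X}}(\Lambda)$ is obtained from $\Lambda$ by replacing $\lambda_f$ with $1-\lambda_f$ for each edge $f$ of $\mathbb{X}$, other labels unchanged; it is again a valid labeling. *)

From mathcomp Require Import all_boot.
Set Implicit Arguments. Unset Strict Implicit. Unset Printing Implicit Defensive.

(* A simple graph on a finite type T is a symmetric irreflexive relation r.
   Its edges are the 2-element sets {x,y} with r x y. *)
Definition is_edge (T : finType) (r : rel T) (s : {set T}) : bool :=
  [exists x, exists y, r x y && (s == [set x; y])].

(* Line graph: vertices are the edges of (T, r) (elements of {set T} that are
   not edges are isolated and never used), two distinct edges adjacent iff
   they share an endpoint. *)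
Definition line_rel (T : finType) (r : rel T) : rel {set T} :=
  fun e f => [&& is_edge r e, is_edge r f, e != f & (e :&: f != set0)].

Section Frak.
Variables (V : finType) (adj : rel V).

(* E1 = edges of G = vertices of L(G);
   E2 = edges of L(G) = vertices of L(L(G)) = vertices of frak L_2(G);
   E3 = edges of L(L(G)). *)
Definition LG := line_rel adj.
Definition LLG := line_rel (line_rel adj).

Definition L2_vertex (x : {set {set V}}) : bool := is_edge LG x.

(* E is an edge of L(L(G)) lying in a triangle of calT, i.e. one of the three
   edges {{a,b},{b,c}} of the L(L(G))-triangle formed by the three edges of a
   triangle {a,b,c} of L(G). *)
Definition in_calT (E : {set {set {set V}}}) : bool :=
  [exists a, exists b, exists c,
     [&& LG a b, LG b c, LG a c & E == [set [set a; b]; [set b; c]]]].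

Definition L2_edge (E : {set {set {set V}}}) : bool :=
  is_edge LLG E && ~~ in_calT E.

Definition clique_verts (e : {set V}) : {set {set {set V}}} :=
  [set x | L2_vertex x & e \in x].
Definition clique_edges (e : {set V}) : {set {set {set {set V}}}} :=
  [set E | L2_edge E & E \subset clique_verts e].

(* A labeling assigns a label in {0,1} (false/true, true = open) to each edge
   of frak L_2(G); values on non-edges are irrelevant. *)
Definition labeling := {set {set {set V}}} -> bool.

Definition valid (L : labeling) : Prop :=
  forall e, is_edge adj e -> forall x, x \in clique_verts e ->
    exists f1, exists f2,
      [/\ f1 \in clique_edges e, f2 \in clique_edges e,
          x \in f1, x \in f2 & L f1 != L f2].

Definition open_rel (L : labeling) : rel {set {set V}} :=
  fun x y => L2_edge [set x; y] && L [set x; y].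

Definition subgraph := ({set {set {set V}}} * {set {set {set {set V}}}})%type.

Definition in_Gamma (L : labeling) (g : subgraph) : Prop :=
  exists x, [/\ L2_vertex x,
    g.1 = [set y | connect (open_rel L) x y] &
    g.2 = [set E | [&& L2_edge E, L E & E \subset g.1]]].

Definition cyc_adjacent (g h : subgraph) : Prop :=
  exists e, [/\ is_edge adj e,
    exists2 f1, f1 \in g.2 & f1 \in clique_edges e &
    exists2 f2, f2 \in h.2 & f2 \in clique_edges e].

Definition flip (e : {set V}) (L : labeling) : labeling :=
  fun E => if E \in clique_edges e then ~~ L E else L E.

Definition flips (es : seq {set V}) (L : labeling) : labeling :=
  foldr flip L es.

End Frak.

Definition simple_graph (V : finType) (adj : rel V) : Prop :=
  (forall u v, adj u v = adj v u) /\ (forall u, ~~ adj u u).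
Definition connected_graph (V : finType) (adj : rel V) : Prop :=
  forall u v, connect adj u v.
Definition bridgeless (V : finType) (adj : rel V) : Prop :=
  forall u v, adj u v ->
    connect (fun x y => adj x y && ([set x; y] != [set u; v])) u v.
Definition triangle_free (V : finType) (adj : rel V) : Prop :=
  forall x y z, ~~ [&& adj x y, adj y z & adj x z].
Definition cubic (V : finType) (adj : rel V) : Prop :=
  forall v, #|[set w | adj v w]| = 3.

From mathcomp Require Import all_boot.
Set Implicit Arguments. Unset Strict Implicit. Unset Printing Implicit Defensive.

(* In a cubic triangle-free graph G, the reduced clique X_e of an edge e = {s, t} is the
   4-cycle joining the two edges of L(G) at s to the two edges at t, and a valid labeling
   opens a perfect matching of it.  Every vertex of frak L_2(G) lies in exactly two reduced
   cliques, so it has two open edges and Gamma_Lambda consists of cycles.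

   Suppose X_e meets two distinct cycles, through the open pairs {z1, u1} and {z2, u2}.
   Removing the edges of X_e does not disconnect z1 from u1, for otherwise z1 would be the
   only vertex of odd degree in its component.  Hence flipping X_e, which swaps its two
   perfect matchings, merges the two cycles into one and leaves alone every cycle that
   avoids X_e.

   As G is connected, g1 and g2 are linked by a chain of cycles in which consecutive cycles
   meet a common reduced clique.  Shortcut the chain where possible; otherwise flip the
   clique shared by its first two inner cycles, which merges them into one while g1, g2 and
   the rest of the chain survive.  A chain with a single inner cycle gives the required
   common neighbour. *)

Lemma eq_set2 (T : finType) (a b c d : T) :
  [set a; b] = [set c; d] -> (a = c /\ b = d) \/ (a = d /\ b = c).
Proof.
move=> E.
have : [&& a \in [set c; d], b \in [set c; d], c \in [set a; b] & d \in [set a; b]].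
  by rewrite -E set21 set22 E set21 set22.
by rewrite !inE => /and4P[]; do 4 (case/orP=> /eqP ?); subst; auto.
Qed.

Lemma set2_injr (T : finType) (a b c : T) : [set a; b] = [set a; c] -> b = c.
Proof. by case/eq_set2=> [[_ ->]|[-> ->]]. Qed.

Lemma handshake (T : finType) (r : rel T) (C : {set T}) :
  symmetric r -> irreflexive r -> ~~ odd (\sum_(x in C) #|[set y in C | r x y]|).
Proof.
move=> r_sym r_irr.
pose below x y := (enum_rank x < enum_rank y) && r x y.
have split_rank x y : (r x y : nat) = below x y + below y x.
  rewrite /below (r_sym y x).
  case: ltngtP => [_|_|/val_inj/enum_rank_inj->]; rewrite ?r_irr //.
  by rewrite addn0.
have -> : \sum_(x in C) #|[set y in C | r x y]| =
          \sum_(x in C) \sum_(y in C) (below x y + below y x).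
  apply: eq_bigr => x _; rewrite -sum1_card big_mkcond /= [RHS]big_mkcond /=.
  by apply: eq_bigr => y _; rewrite inE -split_rank; case: (y \in C); case: (r x y).
rewrite (eq_bigr _ (fun x _ => big_split _ _ _ _ _)) big_split /=.
by rewrite [X in _ + X]exchange_big addnn odd_double.
Qed.

Lemma connect_sub_in (T : finType) (r1 r2 : rel T) (S : {set T}) x y :
  x \in S -> (forall p q, p \in S -> r1 p q -> (q \in S) && r2 p q) ->
  connect r1 x y -> connect r2 x y.
Proof.
move=> xS closedS /connectP[p r1p ->]; apply/connectP; exists p => //.
elim: p x xS r1p => //= z p IH x xS /andP[xz r1p].
by case/andP: (closedS _ _ xS xz) => zS ->; apply: IH.
Qed.

(** * Line graphs *)

Section LineGraph.
Variables (T : finType) (r : rel T).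

Lemma is_edgeP e : reflect (exists s t, r s t /\ e = [set s; t]) (is_edge r e).
Proof.
apply: (iffP existsP) => [[s /existsP[t /andP[st /eqP->]]]|[s [t [st ->]]]].
  by exists s, t.
by exists s; apply/existsP; exists t; rewrite st eqxx.
Qed.

Lemma line_rel_sym : symmetric (line_rel r).
Proof. by move=> a b; rewrite /line_rel andbCA eq_sym setIC. Qed.

Lemma line_rel_irr : irreflexive (line_rel r).
Proof. by move=> a; rewrite /line_rel eqxx !andbF. Qed.

Lemma line_rel_neq a b : line_rel r a b -> a != b.
Proof. by case/and4P. Qed.

Lemma line_rel_edges a b : line_rel r a b -> is_edge r a && is_edge r b.
Proof. by case/and4P=> -> ->. Qed.

Lemma connect_line_rel_share a b s :
  is_edge r a -> is_edge r b -> s \in a -> s \in b -> connect (line_rel r) a b.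
Proof.
move=> ea eb sa sb; have [->|ab] := eqVneq a b; first exact: connect0.
by apply: connect1; rewrite /line_rel ea eb ab; apply/set0Pn; exists s; rewrite inE sa.
Qed.

(* Connectivity of [r] on its non-isolated vertices, a form inherited by [line_rel r]. *)
Lemma connect_line_rel a b :
  (forall s t u v, r s t -> r u v -> connect r s u) ->
  is_edge r a -> is_edge r b -> connect (line_rel r) a b.
Proof.
move=> r_conn ea eb.
case/is_edgeP: (ea) => s [t [st aE]]; case/is_edgeP: (eb) => u [v [uv bE]].
have sa : s \in a by rewrite aE set21.
have ub : u \in b by rewrite bE set21.
case/connectP: (r_conn _ _ _ _ st uv) => p rp lastp.
elim: p s a ea sa rp lastp {st aE} => [|w p IH] s a ea sa /=.
  by move=> _ su; apply: connect_line_rel_share ea eb sa _; rewrite -su.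
case/andP=> sw rp lastp.
have esw : is_edge r [set s; w] by apply/is_edgeP; exists s, w.
apply: connect_trans (connect_line_rel_share ea esw sa (set21 s w)) _.
exact: IH esw (set22 s w) rp lastp.
Qed.

End LineGraph.

(** * Reduced cliques *)

Section CubicGraph.
Variables (V : finType) (adj : rel V).
Hypotheses (adj_sym : symmetric adj) (adj_irr : irreflexive adj).

Local Notation LG := (LG adj).
Local Notation LLG := (LLG adj).
Local Notation L2_vertex := (L2_vertex adj).
Local Notation L2_edge := (L2_edge adj).
Local Notation clique_verts := (clique_verts adj).
Local Notation clique_edges := (clique_edges adj).

Lemma LG_sym : symmetric LG. Proof. exact: line_rel_sym. Qed.
Lemma LG_irr : irreflexive LG. Proof. exact: line_rel_irr. Qed.
Lemma LLG_sym : symmetric LLG. Proof. exact: line_rel_sym. Qed.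

Lemma LG_set2 s t w : adj s t -> adj s w -> t != w -> LG [set s; t] [set s; w].
Proof.
move=> st sw tw; apply/and4P; split.
- by apply/is_edgeP; exists s, t.
- by apply/is_edgeP; exists s, w.
- by apply: contra tw => /eqP/set2_injr->.
- by apply/set0Pn; exists s; rewrite !inE eqxx.
Qed.

Lemma in_calT_set2 a b c : LG a b -> LG a c -> b != c ->
  in_calT adj [set [set a; b]; [set a; c]] = LG b c.
Proof.
move=> ab ac bc; apply/existsP/idP => [[a' /existsP[b' /existsP[c' /and4P[h1 h2 h3 /eqP]]]]|].
  case/eq_set2=> -[/eq_set2 E1 /eq_set2 E2];
    case: E1 => -[? ?]; case: E2 => -[? ?]; subst;
    first [done | by rewrite LG_sym | by rewrite LG_irr in h1 h2 h3
          | by rewrite eqxx in bc].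
move=> bc'; exists b; apply/existsP; exists a; apply/existsP; exists c.
by rewrite LG_sym ab ac bc' [[set b; a]]setUC eqxx.
Qed.

Lemma L2_edge_set2 a b c : LG a b -> LG a c ->
  L2_edge [set [set a; b]; [set a; c]] = (b != c) && ~~ LG b c.
Proof.
move=> ab ac; apply/andP/andP => [[/is_edgeP[x [y [xy E]]] nT]|[bc nbc]].
  have bc : b != c.
    apply: contra_neq (line_rel_neq xy) => eq_bc.
    by case/eq_set2: E => -[<- <-] //; rewrite eq_bc.
  by rewrite -(in_calT_set2 ab ac bc).
split; last by rewrite in_calT_set2.
apply/is_edgeP; exists [set a; b], [set a; c]; split=> //.
apply/and4P; split.
- by apply/is_edgeP; exists a, b.
- by apply/is_edgeP; exists a, c.
- by apply: contra bc => /eqP/set2_injr->.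
- by apply/set0Pn; exists a; rewrite !inE eqxx.
Qed.

Lemma clique_vertsP e y : reflect (exists2 c, LG e c & y = [set e; c]) (y \in clique_verts e).
Proof.
apply: (iffP idP) => [|[c ec ->]]; last first.
  by rewrite inE set21 andbT; apply/is_edgeP; exists e, c.
rewrite inE => /andP[/is_edgeP[a [b [ab ->]]]]; rewrite !inE => /orP[]/eqP->.
  by exists b.
by exists a; rewrite 1?LG_sym // setUC.
Qed.

Lemma clique_verts_edge e y : y \in clique_verts e -> is_edge adj e.
Proof. by case/clique_vertsP=> c /line_rel_edges/andP[]. Qed.

Lemma clique_edges_sub e E : E \in clique_edges e -> E \subset clique_verts e.
Proof. by rewrite inE => /andP[]. Qed.

Lemma clique_edges_set2 e b c : LG e b -> LG e c ->
  ([set [set e; b]; [set e; c]] \in clique_edges e) = (b != c) && ~~ LG b c.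
Proof.
move=> eb ec; rewrite inE L2_edge_set2 //.
suff -> : [set [set e; b]; [set e; c]] \subset clique_verts e by rewrite andbT.
by apply/subsetP=> y /set2P[]->; apply/clique_vertsP; [exists b | exists c].
Qed.

Lemma clique_edges_at e E x : E \in clique_edges e -> x \in E ->
  exists2 y, x != y & E = [set x; y].
Proof.
rewrite inE => /andP[/andP[/is_edgeP[p [q [/line_rel_neq pq ->]]] _] _] /set2P[]->.
  by exists q.
by exists p; rewrite 1?setUC // eq_sym.
Qed.

Lemma clique_edges_disjoint e1 e2 E :
  E \in clique_edges e1 -> E \in clique_edges e2 -> e1 = e2.
Proof.
rewrite !inE => /andP[/andP[/is_edgeP[x [y [/line_rel_neq xy ->]]] _] sub1] /andP[_ sub2].
apply/eqP; apply: contraR xy => e12.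
have pair_e12 z : z \in [set x; y] -> z = [set e1; e2].
  move=> zxy; have /clique_vertsP[c _ zE] := subsetP sub1 z zxy.
  have := subsetP sub2 z zxy; rewrite inE zE !inE eq_sym (negbTE e12) /=.
  by case/andP=> _ /eqP->.
by rewrite (pair_e12 x (set21 x y)) (pair_e12 y (set22 x y)).
Qed.

Hypotheses (adj_triangle_free : triangle_free adj) (adj_cubic : cubic adj).

Definition side e s t := [set [set e; [set s; z]] | z in [set z | adj s z & z != t]].

Lemma card_side e s t : adj s t -> #|side e s t| = 2.
Proof.
move=> st; rewrite card_imset; last by move=> z w /set2_injr/set2_injr.
have -> : [set z | adj s z & z != t] = [set z | adj s z] :\ t.
  by apply/setP=> z; rewrite !inE andbC.
by have := cardsD1 t [set z | adj s z]; rewrite adj_cubic inE st add1n; case.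
Qed.

Lemma LG_cross s t z w : adj s t -> adj s z -> z != t -> adj t w -> w != s ->
  ([set s; z] != [set t; w]) && ~~ LG [set s; z] [set t; w].
Proof.
move=> st sz zt tw s_w; have s_t : s != t by apply: contraTneq st => ->; rewrite adj_irr.
apply/andP; split.
  by apply: contra_neq s_t => /eq_set2[[]|[_ zE]] //; rewrite zE eqxx in zt.
apply/negP=> /and4P[_ _ _ /set0Pn[u]]; rewrite !inE => /andP[/orP[]/eqP-> /orP[]/eqP uE].
- by rewrite uE eqxx in s_t.
- by rewrite uE eqxx in s_w.
- by rewrite uE eqxx in zt.
- by move: (adj_triangle_free s t z); rewrite st sz uE tw.
Qed.

Lemma clique_verts_sides e s t : e = [set s; t] -> adj s t ->
  clique_verts e \subset side e s t :|: side e t s.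
Proof.
move=> eE st; apply/subsetP=> y /clique_vertsP[c ec ->].
case/and4P: (ec) => _ /is_edgeP[p [q [pq cE]]] ec_neq /set0Pn[u].
rewrite inE => /andP[ue uc].
have [w cuw uw] : exists2 w, c = [set u; w] & adj u w.
  by move: uc; rewrite cE => /set2P[]->; [exists q | exists p; rewrite 1?setUC // adj_sym].
move: ue; rewrite eE => /set2P[] uE; subst u; apply/setUP; [left | right];
  apply/imsetP; exists w; rewrite ?cuw // inE uw andTb;
  by apply: contra_neq ec_neq => wE; rewrite eE cuw wE // setUC.
Qed.

Lemma clique_edges_side e s t x y : e = [set s; t] -> adj s t -> x \in side e s t ->
  ([set x; y] \in clique_edges e) = (y \in side e t s).
Proof.
move=> eE st /imsetP[z]; rewrite inE => /andP[sz zt] ->.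
have ez : LG e [set s; z] by rewrite eE LG_set2 // eq_sym.
apply/idP/idP => [xy | /imsetP[w]].
  have := subsetP (clique_verts_sides eE st) y (subsetP (clique_edges_sub xy) y (set22 _ _)).
  case/setUP=> // /imsetP[w]; rewrite inE => /andP[sw wt] yE; move: xy.
  have ew : LG e [set s; w] by rewrite eE LG_set2 // eq_sym.
  rewrite yE clique_edges_set2 //.
  have [->|zw] := eqVneq z w; first by rewrite eqxx.
  by rewrite (LG_set2 sz sw zw) andbF.
rewrite inE => /andP[tw ws] ->.
have ew : LG e [set t; w] by rewrite eE setUC LG_set2 // 1?adj_sym // eq_sym.
by rewrite clique_edges_set2 // LG_cross.
Qed.

Lemma card_clique_verts e : is_edge adj e -> #|clique_verts e| <= 4.
Proof.
case/is_edgeP=> s [t [st eE]].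
apply: leq_trans (subset_leq_card (clique_verts_sides eE st)) _.
by rewrite (leq_trans (leq_card_setU _ _)) // !card_side // adj_sym.
Qed.

Definition clique_nbrs e x := [set y | [set x; y] \in clique_edges e].

Lemma card_clique_nbrs e x : x \in clique_verts e -> #|clique_nbrs e x| = 2.
Proof.
move=> xe; have /is_edgeP[s [t [st eE]]] := clique_verts_edge xe.
wlog xs : s t st eE / x \in side e s t.
  move=> gen; case/setUP: (subsetP (clique_verts_sides eE st) x xe); first exact: gen.
  by apply: gen; rewrite 1?adj_sym // eE setUC.
suff -> : clique_nbrs e x = side e t s by rewrite card_side // adj_sym.
by apply/setP=> y; rewrite inE (clique_edges_side _ eE st xs).
Qed.

(** * Open edges and flips *)

Local Notation orel L := (open_rel adj L).

Definition open_nbrs (L : labeling V) e x := [set y in clique_nbrs e x | L [set x; y]].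

Lemma card_open_nbrs L e x : valid adj L -> x \in clique_verts e ->
  #|open_nbrs L e x| = 1.
Proof.
move=> vL xe; have [f1 [f2 [f1e f2e xf1 xf2 Lf]]] := vL e (clique_verts_edge xe) x xe.
have [y1 _ f1E] := clique_edges_at f1e xf1; have [y2 _ f2E] := clique_edges_at f2e xf2.
subst f1 f2; have y12 : y1 != y2 by apply: contraNneq Lf => ->.
have nbrsE : clique_nbrs e x = [set y1; y2].
  apply/eqP; rewrite eq_sym eqEcard cards2 y12 card_clique_nbrs // andbT.
  by apply/subsetP=> y /set2P[]->; rewrite inE.
wlog [L1 L2] : y1 y2 y12 {Lf f1e f2e xf1 xf2} nbrsE / L [set x; y1] /\ ~~ L [set x; y2].
  move=> gen; have [L1|L1] := boolP (L [set x; y1]).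
    by apply: (gen y1 y2 y12 nbrsE); split=> //; move: Lf; rewrite L1; case: (L _).
  apply: (gen y2 y1); [by rewrite eq_sym | by rewrite setUC | split=> //].
  by move: Lf; rewrite (negbTE L1); case: (L _).
apply/eqP/cards1P; exists y1; apply/setP=> y; rewrite /open_nbrs nbrsE !inE.
by case: eqVneq => [->|_]; rewrite ?L1 //=; case: eqVneq => [->|_]; rewrite ?(negbTE L2).
Qed.

Lemma valid_flip L e : valid adj L -> valid adj (flip adj e L).
Proof.
move=> vL e' e'E x xe'; have [f1 [f2 [f1e' f2e' xf1 xf2 Lf]]] := vL e' e'E x xe'.
exists f1, f2; split=> //; rewrite /flip.
have [->|ee'] := eqVneq e e'; first by rewrite f1e' f2e' (inj_eq negb_inj).
have notin f : f \in clique_edges e' -> f \notin clique_edges e.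
  by move=> fe'; apply: contraNN ee' => fe; rewrite (clique_edges_disjoint fe fe').
by rewrite (negbTE (notin _ f1e')) (negbTE (notin _ f2e')).
Qed.

Lemma open_rel_sym L : symmetric (orel L).
Proof. by move=> x y; rewrite /open_rel setUC. Qed.

Lemma open_rel_clique L x y : orel L x y ->
  exists2 e, e \in x & [set x; y] \in clique_edges e.
Proof.
case/andP=> xyE _; case/andP: (xyE) => /is_edgeP[p [q [pq pqE]]] _.
have {pq} xy : LLG x y by case/eq_set2: pqE => -[-> ->] //; rewrite LLG_sym.
case/and4P: xy => vx vy _ /set0Pn[e]; rewrite inE => /andP[ex ey].
exists e => //; rewrite inE xyE.
by apply/subsetP=> z /set2P[]->; rewrite inE; apply/andP.
Qed.

Lemma open_rel_irr L : irreflexive (orel L).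
Proof.
move=> x; apply/negP => /open_rel_clique[e _ /clique_edges_at/(_ (set21 x x))[y xy E]].
have : y \in [set x; x] by rewrite E set22.
by rewrite !inE orbb eq_sym (negbTE xy).
Qed.

Lemma in_open_nbrs L e x y :
  (y \in open_nbrs L e x) = ([set x; y] \in clique_edges e) && L [set x; y].
Proof. by rewrite !inE. Qed.

Lemma open_rel_set2 L a b y : LG a b ->
  orel L [set a; b] y = (y \in open_nbrs L a [set a; b]) || (y \in open_nbrs L b [set a; b]).
Proof.
move=> ab; rewrite !in_open_nbrs; apply/idP/idP => [xy|].
  have [e /set2P[] -> xyE] := open_rel_clique xy; case/andP: xy => _ ->.
    by rewrite xyE.
  by rewrite xyE orbT.
by case/orP=> /andP[]; rewrite inE /open_rel => /andP[-> _] ->.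
Qed.

Lemma card_open_rel L x : valid adj L -> L2_vertex x -> #|[set y | orel L x y]| = 2.
Proof.
move=> vL /is_edgeP[a [b [ab ->]]].
have -> : [set y | orel L [set a; b] y] = open_nbrs L a [set a; b] :|: open_nbrs L b [set a; b].
  by apply/setP=> y; rewrite inE in_setU open_rel_set2.
rewrite cardsU.
have -> : open_nbrs L a [set a; b] :&: open_nbrs L b [set a; b] = set0.
  apply/setP=> y; rewrite in_set0 in_setI !in_open_nbrs.
  apply/negP=> /andP[/andP[ya _] /andP[yb _]].
  by move: (line_rel_neq ab); rewrite (clique_edges_disjoint ya yb) eqxx.
rewrite cards0 subn0 !card_open_nbrs //; apply/clique_vertsP.
  by exists a; rewrite 1?LG_sym // setUC.
by exists b.
Qed.

Lemma connect_L2_vertex L x y : L2_vertex x -> connect (orel L) x y -> L2_vertex y.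
Proof.
move=> vx /connectP[p]; case/lastP: p => [_ -> //|p z].
rewrite rcons_path last_rcons => /andP[_ /open_rel_clique[e _ /clique_edges_sub/subsetP]].
by move=> /(_ z (set22 _ _)); rewrite inE => /andP[vz _] ->.
Qed.

Definition open_off L e : rel {set {set V}} :=
  fun x y => orel L x y && ([set x; y] \notin clique_edges e).

Lemma open_off_sym L e : symmetric (open_off L e).
Proof. by move=> x y; rewrite /open_off open_rel_sym setUC. Qed.

Lemma open_off_irr L e : irreflexive (open_off L e).
Proof. by move=> x; rewrite /open_off open_rel_irr. Qed.

Lemma open_off_out L e x y : x \notin clique_verts e -> open_off L e x y = orel L x y.
Proof.
move=> xe; rewrite /open_off andb_idr // => _; apply: contra xe => /clique_edges_sub/subsetP.
by apply; rewrite set21.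
Qed.

Lemma card_open_off L e x : valid adj L -> x \in clique_verts e ->
  #|[set y | open_off L e x y]| = 1.
Proof.
move=> vL /clique_vertsP[c ec ->].
suff -> : [set y | open_off L e [set e; c] y] = open_nbrs L c [set e; c].
  by rewrite card_open_nbrs //; apply/clique_vertsP; exists e; rewrite 1?LG_sym // setUC.
apply/setP=> y; rewrite inE /open_off open_rel_set2 // !in_open_nbrs.
case Ee: ([set _; y] \in clique_edges e); rewrite /= ?andbT // andbF.
case Ec: ([set _; y] \in clique_edges c) => //.
by move: (line_rel_neq ec); rewrite (clique_edges_disjoint Ee Ec) eqxx.
Qed.

Lemma connect_open_off L e p p' : valid adj L -> p' \in open_nbrs L e p ->
  {in clique_verts e, forall q, connect (orel L) p q -> q \in [set p; p']} ->
  connect (open_off L e) p p'.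
Proof.
move=> vL pp' comp_p; apply: contraT => not_pp'.
have pe : p \in clique_verts e.
  by move: pp'; rewrite in_open_nbrs => /andP[/clique_edges_sub/subsetP->] //; rewrite set21.
have off_open y : connect (open_off L e) p y -> connect (orel L) p y.
  by apply: connect_sub => u v /andP[uv _]; apply: connect1.
pose C := [set y | connect (open_off L e) p y].
have degC y : y \in C -> #|[set z in C | open_off L e y z]| = if y == p then 1 else 2.
  rewrite inE => py; rewrite setIdE (setIidPr _); last first.
    by apply/subsetP=> z; rewrite !inE => /connect1; apply: connect_trans.
  have [->|yp] := eqVneq y p; first exact: card_open_off.
  have ye : y \notin clique_verts e.
    apply: contra not_pp' => ye; have := comp_p y ye (off_open y py).
    by rewrite !inE (negbTE yp) /= => /eqP<-.
  have -> : [set z | open_off L e y z] = [set z | orel L y z].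
    by apply/setP=> z; rewrite !inE open_off_out.
  rewrite card_open_rel //.
  by apply: connect_L2_vertex (off_open y py); move: pe; rewrite inE => /andP[].
(* [p] would be the only vertex of odd degree in [C]. *)
have := handshake C (open_off_sym L e) (open_off_irr L e).
rewrite (eq_bigr _ degC) (bigD1 p) ?inE ?connect0 //= eqxx oddD /=.
suff even_rest : ~~ odd (\sum_(y in C | y != p) (if y == p then 1 else 2)) by rewrite even_rest.
by elim/big_ind: _ => // [m n|y /andP[_ /negbTE->]] //; rewrite oddD => /negbTE-> /negbTE->.
Qed.

Lemma connect_open_off_flip L e :
  subrel (connect (open_off L e)) (connect (orel (flip adj e L))).
Proof.
apply: connect_sub => x y /andP[/andP[xyE Lxy] nxy]; apply: connect1.
by rewrite /open_rel /flip xyE (negbTE nxy).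
Qed.

Lemma open_partner L e x : valid adj L -> x \in clique_verts e ->
  exists2 u, open_nbrs L e x = [set u] & orel L x u && (u \in clique_verts e).
Proof.
move=> vL xe; have /eqP/cards1P[u uE] := card_open_nbrs vL xe; exists u => //.
have : u \in open_nbrs L e x by rewrite uE set11.
rewrite in_open_nbrs => /andP[xuE Lxu]; move: (xuE); rewrite inE => /andP[xuL2 xu_sub].
by rewrite /open_rel xuL2 Lxu (subsetP xu_sub) ?set22.
Qed.

Lemma clique_verts_split L e z1 u1 z2 u2 :
  orel L z1 u1 -> orel L z2 u2 -> ~~ connect (orel L) z1 z2 ->
  {subset [:: z1; u1; z2; u2] <= clique_verts e} -> clique_verts e =i [:: z1; u1; z2; u2].
Proof.
move=> z1u1 z2u2 nc sub.
have apart x y : connect (orel L) z1 x -> connect (orel L) z2 y -> x != y.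
  move=> cx cy; apply: contraNneq nc => xy.
  by rewrite (connect_trans cx) // xy (sym_connect_sym (open_rel_sym L)).
have s_uniq : uniq [:: z1; u1; z2; u2].
  have [z1_u1 z2_u2] : z1 != u1 /\ z2 != u2.
    by split; [move: z1u1 | move: z2u2]; apply: contraTneq => <-; rewrite open_rel_irr.
  have [c11 c12] := (connect0 (orel L) z1, connect1 z1u1).
  have [c22 c21] := (connect0 (orel L) z2, connect1 z2u2).
  by rewrite /= !inE !negb_or z1_u1 z2_u2 !apart.
have e_edge : is_edge adj e by apply: (@clique_verts_edge _ z1); apply: sub; rewrite inE eqxx.
have s_sub : [:: z1; u1; z2; u2] \subset clique_verts e by apply/subsetP.
have /subset_cardP/(_ s_sub) eq_s : #|[:: z1; u1; z2; u2]| = #|clique_verts e|.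
  by apply/eqP; rewrite eqn_leq subset_leq_card // (card_uniqP s_uniq) card_clique_verts.
by move=> x; rewrite eq_s.
Qed.

Lemma connect_flip_partner L e z u z' u' : valid adj L ->
  clique_verts e =i [:: z; u; z'; u'] -> orel L z' u' -> ~~ connect (orel L) z z' ->
  open_nbrs L e z = [set u] -> connect (orel (flip adj e L)) z u.
Proof.
move=> vL Xe z'u' ncz uE; apply/connect_open_off_flip/(connect_open_off vL).
  by rewrite uE set11.
move=> q; rewrite Xe !inE => /or4P[]/eqP-> zq.
- by rewrite eqxx.
- by rewrite eqxx orbT.
- by rewrite zq in ncz.
have := connect1 z'u'; rewrite (sym_connect_sym (open_rel_sym L)) => /(connect_trans zq).
by rewrite (negbTE ncz).
Qed.

Lemma flip_connects_clique L e z1 z2 : valid adj L ->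
  z1 \in clique_verts e -> z2 \in clique_verts e -> ~~ connect (orel L) z1 z2 ->
  {in clique_verts e, forall q, connect (orel (flip adj e L)) z1 q}.
Proof.
move=> vL z1e z2e nc; set L' := flip adj e L.
have [u1 u1E /andP[z1u1 u1e]] := open_partner vL z1e.
have [u2 u2E /andP[z2u2 u2e]] := open_partner vL z2e.
have Xe : clique_verts e =i [:: z1; u1; z2; u2].
  apply: (clique_verts_split z1u1 z2u2 nc) => q.
  by rewrite !in_cons in_nil orbF => /or4P[]/eqP->.
have L'z1u1 := connect_flip_partner vL Xe z2u2 nc u1E.
have L'z2u2 : connect (orel L') z2 u2.
  have /permPl/perm_mem swap := perm_catC [:: z1; u1] [:: z2; u2].
  have Xe' : clique_verts e =i [:: z2; u2; z1; u1] by move=> q; rewrite Xe swap.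
  by apply: (connect_flip_partner vL Xe' z1u1 _ u2E); rewrite (sym_connect_sym (open_rel_sym L)).
have [v vE /andP[z1v ve]] := open_partner (valid_flip e vL) z1e.
have v_u1 : v != u1.
  have := set11 v; rewrite -vE in_open_nbrs => /andP[z1vE].
  rewrite /L' /flip z1vE; apply: contraTneq => ->.
  by case/andP: z1u1 => _ ->.
have L'z1z2 : connect (orel L') z1 z2.
  move: (ve); rewrite Xe !inE => /or4P[]/eqP vE'.
  - by move: z1v; rewrite vE' open_rel_irr.
  - by rewrite vE' eqxx in v_u1.
  - by rewrite -vE' connect1.
  by rewrite (connect_trans (connect1 z1v)) // vE' (sym_connect_sym (open_rel_sym L')).
move=> q; rewrite Xe !inE => /or4P[]/eqP->; rewrite ?connect0 //.
exact: connect_trans L'z1z2 L'z2u2.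
Qed.

Lemma connect_flip_merge L e z1 z2 : valid adj L ->
  z1 \in clique_verts e -> z2 \in clique_verts e -> ~~ connect (orel L) z1 z2 ->
  forall y, connect (orel L) z1 y || connect (orel L) z2 y ->
  connect (orel (flip adj e L)) z1 y.
Proof.
move=> vL z1e z2e nc; set L' := flip adj e L.
have to_z1 := flip_connects_clique vL z1e z2e nc.
have csym' := sym_connect_sym (open_rel_sym L').
have sub : subrel (connect (orel L)) (connect (orel L')).
  apply: connect_sub => p q pq.
  have [pqE|pqNE] := boolP ([set p; q] \in clique_edges e).
    have /subsetP pq_sub := clique_edges_sub pqE.
    by rewrite (connect_trans _ (to_z1 q (pq_sub q (set22 p q)))) // csym' to_z1 ?pq_sub ?set21.
  by apply: connect1; move: pq; rewrite /open_rel /L' /flip (negbTE pqNE).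
by move=> y /orP[/sub //|/sub z2y]; apply: connect_trans (to_z1 z2 z2e) z2y.
Qed.

(** * Cycles *)

Definition component L x : subgraph V :=
  ([set y | connect (orel L) x y],
   [set E | [&& L2_edge E, L E & E \subset [set y | connect (orel L) x y]]]).

Lemma in_GammaP L g : in_Gamma adj L g <-> exists2 x, L2_vertex x & g = component L x.
Proof.
split=> [[x [vx g1E g2E]]|[x vx ->]]; last by exists x.
by exists x => //; case: g g1E g2E => g1 g2 /= -> ->.
Qed.

Lemma component_eq L x y : connect (orel L) x y -> component L x = component L y.
Proof.
move=> xy; rewrite /component.
suff -> : [set z | connect (orel L) x z] = [set z | connect (orel L) y z] by [].
by apply/setP=> z; rewrite !inE (same_connect (sym_connect_sym (open_rel_sym L)) xy).
Qed.

Lemma in_Gamma_mem L g z : in_Gamma adj L g -> z \in g.1 -> g = component L z.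
Proof. by case/in_GammaP=> x _ ->; rewrite inE; apply: component_eq. Qed.

Definition meets (g : subgraph V) e := g.1 :&: clique_verts e != set0.

Lemma meets_sub (g h : subgraph V) e : g.1 \subset h.1 -> meets g e -> meets h e.
Proof.
move=> gh /set0Pn[z]; rewrite in_setI => /andP[zg ze].
by apply/set0Pn; exists z; rewrite in_setI (subsetP gh) ?ze.
Qed.

Lemma meets_component L x e : x \in clique_verts e -> meets (component L x) e.
Proof. by move=> xe; apply/set0Pn; exists x; rewrite in_setI xe andbT /= inE connect0. Qed.

Lemma meetsP L g e : valid adj L -> in_Gamma adj L g ->
  reflect (exists2 f, f \in g.2 & f \in clique_edges e) (meets g e).
Proof.
move=> vL gG; rewrite /meets; apply: (iffP (set0Pn _)) => [[z]|[f fg fe]].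
  rewrite in_setI => /andP[zg ze]; rewrite (in_Gamma_mem gG zg).
  have [u uE /andP[zu _]] := open_partner vL ze.
  have := set11 u; rewrite -uE in_open_nbrs => /andP[zuE Lzu].
  exists [set z; u] => //; rewrite inE Lzu; case/andP: (zu) => -> _ /=.
  by apply/subsetP=> y /set2P[]->; rewrite inE ?connect0 // connect1.
have [x _ gE] := (in_GammaP L g).1 gG.
have [p pf] : exists p, p \in f.
  by move: (fe); rewrite inE => /andP[/andP[/is_edgeP[p [q [_ ->]]] _] _]; exists p; rewrite set21.
move: fg; rewrite gE inE => /and3P[_ _ /subsetP f_sub].
by exists p; rewrite in_setI f_sub //= (subsetP (clique_edges_sub fe)).
Qed.

Lemma cyc_adjacent_meets L g h : valid adj L -> in_Gamma adj L g -> in_Gamma adj L h ->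
  cyc_adjacent adj g h <-> exists e, meets g e /\ meets h e.
Proof.
move=> vL gG hG; split=> [[e [_ gf hf]]|[e [ge he]]].
  by exists e; split; [apply/(meetsP e vL gG) | apply/(meetsP e vL hG)].
have /set0Pn[z] := ge; rewrite in_setI => /andP[_ /clique_verts_edge e_edge].
by exists e; split=> //; [apply/(meetsP e vL gG) | apply/(meetsP e vL hG)].
Qed.

Lemma cyc_adjacent_sym (g h : subgraph V) : cyc_adjacent adj g h -> cyc_adjacent adj h g.
Proof. by case=> e [e_edge gf hf]; exists e. Qed.

Lemma in_Gamma_flip L e g : in_Gamma adj L g -> ~~ meets g e -> in_Gamma adj (flip adj e L) g.
Proof.
case/in_GammaP=> x vx -> {g}; rewrite /meets negbK setI_eq0 /= => S_out.
set L' := flip adj e L; set S := [set y | connect (orel L) x y].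
have flipE (E : {set {set {set V}}}) p : p \in E -> p \in S -> L' E = L E.
  move=> pE pS; rewrite /L' /flip; case: ifP => // /clique_edges_sub/subsetP/(_ p pE).
  by rewrite (disjointFr S_out pS).
have agree p q : p \in S -> orel L' p q = orel L p q.
  by move=> pS; rewrite /open_rel (flipE _ p) ?set21.
have xS : x \in S by rewrite inE connect0.
have closedS p q : p \in S -> orel L p q -> q \in S.
  by rewrite !inE => xp pq; apply: connect_trans xp (connect1 pq).
have S'E : [set y | connect (orel L') x y] = S.
  apply/setP=> y; rewrite [in RHS]inE inE; apply/idP/idP => xy; apply: connect_sub_in xS _ xy.
    by move=> p q pS; rewrite agree // => pq; rewrite pq (closedS p).
  by move=> p q pS pq; rewrite agree // pq (closedS p).
apply/in_GammaP; exists x => //; rewrite /component S'E -/S; congr pair.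
apply/setP=> E; rewrite !inE; case: (boolP (E \subset S)) => [/subsetP E_sub|]; rewrite ?andbF //.
case: (boolP (L2_edge E)) => //= /andP[/is_edgeP[p [q [_ EE]]] _].
have pE : p \in E by rewrite EE set21.
by rewrite (flipE _ p) ?E_sub.
Qed.

Lemma cyc_adjacent_widen L L' (c c' g : subgraph V) : valid adj L -> valid adj L' ->
  in_Gamma adj L c -> in_Gamma adj L g -> in_Gamma adj L' c' -> in_Gamma adj L' g ->
  c.1 \subset c'.1 -> cyc_adjacent adj c g -> cyc_adjacent adj c' g.
Proof.
move=> vL vL' cG gG c'G gG' cc' /(cyc_adjacent_meets vL cG gG)[e [ce ge]].
by apply/(cyc_adjacent_meets vL' c'G gG'); exists e; split=> //; apply: meets_sub ce.
Qed.

Fixpoint adj_path (a : subgraph V) (cs : seq (subgraph V)) (b : subgraph V) : Prop :=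
  if cs is c :: cs' then cyc_adjacent adj a c /\ adj_path c cs' b else cyc_adjacent adj a b.

Lemma adj_path_drop a cs1 c cs2 b : adj_path a (cs1 ++ c :: cs2) b -> adj_path c cs2 b.
Proof. by elim: cs1 a => [|d cs1 IH] a /= [_ //]; apply: IH. Qed.

Lemma flip_merges_cycles L e c1 c2 z1 z2 : valid adj L ->
  in_Gamma adj L c1 -> in_Gamma adj L c2 -> c1 != c2 -> z1 \in c1.1 -> z2 \in c2.1 ->
  z1 \in clique_verts e -> z2 \in clique_verts e ->
  c1.1 :|: c2.1 \subset (component (flip adj e L) z1).1.
Proof.
move=> vL c1G c2G c12 z1c1 z2c2 z1e z2e.
have nc : ~~ connect (orel L) z1 z2.
  apply: contra c12 => /component_eq.
  by rewrite -(in_Gamma_mem c1G z1c1) -(in_Gamma_mem c2G z2c2) => ->.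
apply/subsetP=> y; rewrite (in_Gamma_mem c1G z1c1) (in_Gamma_mem c2G z2c2) /= !inE => zy.
exact: connect_flip_merge vL z1e z2e nc y zy.
Qed.

Lemma adj_path_merge L e g1 g2 c1 c2 cs : valid adj L ->
  in_Gamma adj L g1 -> in_Gamma adj L g2 -> {in c1 :: c2 :: cs, forall c, in_Gamma adj L c} ->
  c1 != c2 -> meets c1 e -> meets c2 e ->
  ~~ meets g1 e -> ~~ meets g2 e -> ~~ has (meets^~ e) cs ->
  adj_path g1 (c1 :: c2 :: cs) g2 ->
  exists c3, let L' := flip adj e L in
    [/\ in_Gamma adj L' g1, in_Gamma adj L' g2,
        {in c3 :: cs, forall c, in_Gamma adj L' c} & adj_path g1 (c3 :: cs) g2].
Proof.
move=> vL g1G g2G csG c12 /set0Pn[z1] + /set0Pn[z2] + g1e g2e cs_e [g1c1 [c1c2 c2_path]].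
rewrite !in_setI => /andP[z1c1 z1e] /andP[z2c2 z2e].
have [c1G c2G] : in_Gamma adj L c1 /\ in_Gamma adj L c2.
  by split; apply: csG; rewrite !inE eqxx ?orbT.
set L' := flip adj e L; have vL' : valid adj L' := valid_flip e vL.
exists (component L' z1); set c3 := component L' z1.
have c3G : in_Gamma adj L' c3.
  by apply/in_GammaP; exists z1 => //; move: z1e; rewrite inE => /andP[].
have /subUsetP[sub1 sub2] := flip_merges_cycles vL c1G c2G c12 z1c1 z2c2 z1e z2e.
have csG' : {in cs, forall c, in_Gamma adj L' c}.
  move=> c ccs; apply: in_Gamma_flip; first by apply: csG; rewrite !inE ccs !orbT.
  by apply: contra cs_e => ce; apply/hasP; exists c.
have [g1G' g2G'] := (in_Gamma_flip g1G g1e, in_Gamma_flip g2G g2e).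
split=> //.
  by move=> c; rewrite inE => /orP[/eqP->|/csG'].
split.
  by apply/cyc_adjacent_sym/(cyc_adjacent_widen vL vL' c1G g1G c3G g1G' sub1)/cyc_adjacent_sym.
case: cs csG csG' {cs_e} c2_path => [|d cs] csG csG' /=.
  exact: cyc_adjacent_widen vL vL' c2G g2G c3G g2G' sub2.
case=> c2d d_path; split=> //.
have dG : in_Gamma adj L d by apply: csG; rewrite !inE eqxx !orbT.
by apply: cyc_adjacent_widen vL vL' c2G dG c3G (csG' d _) sub2 c2d; rewrite inE eqxx.
Qed.

Definition joinable L (g1 g2 : subgraph V) : Prop :=
  exists es : seq {set V}, all (is_edge adj) es /\
    let L' := flips adj es L in
    [/\ in_Gamma adj L' g1, in_Gamma adj L' g2 &
        exists g3, [/\ in_Gamma adj L' g3, cyc_adjacent adj g3 g1 & cyc_adjacent adj g3 g2]].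

Lemma joinable_flip L e g1 g2 : is_edge adj e -> joinable (flip adj e L) g1 g2 -> joinable L g1 g2.
Proof.
move=> e_edge [es [es_edges joined]]; exists (rcons es e).
by rewrite all_rcons e_edge /flips foldr_rcons.
Qed.

Lemma joinable_common L g1 g2 c : in_Gamma adj L g1 -> in_Gamma adj L g2 -> in_Gamma adj L c ->
  cyc_adjacent adj g1 c -> cyc_adjacent adj c g2 -> joinable L g1 g2.
Proof.
move=> g1G g2G cG g1c cg2; exists [::]; split=> //; split=> //.
by exists c; split=> //; apply: cyc_adjacent_sym.
Qed.

Lemma adj_path_shortcut L e g1 g2 c1 c2 cs : valid adj L -> in_Gamma adj L g1 ->
  {in c1 :: c2 :: cs, forall c, in_Gamma adj L c} -> meets c1 e -> meets c2 e ->
  [|| meets g1 e, c1 == c2 | has (meets^~ e) cs] -> adj_path g1 (c1 :: c2 :: cs) g2 ->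
  exists cs', [/\ size cs' <= (size cs).+1, {in cs', forall c, in_Gamma adj L c}
                & adj_path g1 cs' g2].
Proof.
move=> vL g1G csG c1e c2e short [g1c1 [c1c2 c2_path]].
have c1G : in_Gamma adj L c1 by apply: csG; rewrite inE eqxx.
have meets_adj c c' : in_Gamma adj L c -> in_Gamma adj L c' -> meets c e -> meets c' e ->
    cyc_adjacent adj c c'.
  by move=> cG c'G ce c'e; apply/(cyc_adjacent_meets vL cG c'G); exists e.
case/or3P: short => [g1e|/eqP c12|/hasP[c ccs ce]].
- have c2G : in_Gamma adj L c2 by apply: csG; rewrite !inE eqxx orbT.
  exists (c2 :: cs); split=> //=; last by split=> //; apply: meets_adj.
  by move=> c cc; apply: csG; rewrite inE cc orbT.
- exists (c1 :: cs); split=> //=; last by split=> //; rewrite c12.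
  by move=> c; rewrite inE => /orP[/eqP->|cc] //; apply: csG; rewrite !inE cc !orbT.
case/splitPr: ccs c2_path csG => cs1 cs2 /adj_path_drop c_path csG.
have cG : in_Gamma adj L c by apply: csG; rewrite !inE mem_cat inE eqxx !orbT.
exists [:: c1, c & cs2]; split=> /=.
- by rewrite size_cat /= !ltnS leq_addl.
- by move=> d; rewrite !inE => /or3P[/eqP->|/eqP->|dcs2] //; apply: csG;
    rewrite !inE mem_cat inE dcs2 !orbT.
by split=> //; split=> //; apply: meets_adj.
Qed.

Lemma joinable_of_adj_path L g1 g2 cs : valid adj L ->
  in_Gamma adj L g1 -> in_Gamma adj L g2 -> {in cs, forall c, in_Gamma adj L c} ->
  ~ cyc_adjacent adj g1 g2 -> adj_path g1 cs g2 -> joinable L g1 g2.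
Proof.
have [n] := ubnP (size cs); elim: n L cs => // n IH L [|c1 [|c2 cs]] /= sz vL g1G g2G csG nadj.
- by [].
- by case; apply: joinable_common => //; apply: csG; rewrite inE.
move=> path; have [g1c1 [c1c2 _]] := path.
have [c1G c2G] : in_Gamma adj L c1 /\ in_Gamma adj L c2.
  by split; apply: csG; rewrite !inE eqxx ?orbT.
have [e [c1e c2e]] := (cyc_adjacent_meets vL c1G c2G).1 c1c2.
have [short|] := boolP [|| meets g1 e, c1 == c2 | has (meets^~ e) cs].
  have [cs' [sz' csG' path']] := adj_path_shortcut vL g1G csG c1e c2e short path.
  by apply: IH vL g1G g2G csG' nadj path'; apply: leq_ltn_trans sz' _.
rewrite !negb_or => /and3P[g1e c12 cs_e].
have [g2e|g2e] := boolP (meets g2 e).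
  by apply: (joinable_common g1G g2G c1G g1c1); apply/(cyc_adjacent_meets vL c1G g2G); exists e.
have [c3 [g1G' g2G' csG' path']] := adj_path_merge vL g1G g2G csG c12 c1e c2e g1e g2e cs_e path.
have /set0Pn[z /setIP[_ /clique_verts_edge e_edge]] := c1e.
apply: (joinable_flip e_edge); apply: IH (valid_flip e vL) g1G' g2G' csG' nadj path'.
by rewrite /= ltnS in sz *.
Qed.

Lemma cyc_adjacent_component L e x y : valid adj L ->
  x \in clique_verts e -> y \in clique_verts e ->
  cyc_adjacent adj (component L x) (component L y).
Proof.
move=> vL xe ye; have compG z : z \in clique_verts e -> in_Gamma adj L (component L z).
  by rewrite inE => /andP[vz _]; apply/in_GammaP; exists z.
apply/(cyc_adjacent_meets vL (compG x xe) (compG y ye)).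
by exists e; split; apply: meets_component.
Qed.

Lemma LLG_clique x y : LLG x y -> exists e, (x \in clique_verts e) && (y \in clique_verts e).
Proof.
case/and4P=> vx vy _ /set0Pn[e]; rewrite in_setI => /andP[ex ey].
by exists e; rewrite !inE ex ey !andbT; apply/andP.
Qed.

Lemma connect_LLG x y : connected_graph adj -> L2_vertex x -> L2_vertex y -> connect LLG x y.
Proof.
move=> conn; apply: connect_line_rel => a b c d /line_rel_edges/andP[ea _].
move=> /line_rel_edges/andP[ec _].
by apply: connect_line_rel => // s t u v _ _; apply: conn.
Qed.

Lemma adj_path_exists L g1 g2 : connected_graph adj -> valid adj L ->
  in_Gamma adj L g1 -> in_Gamma adj L g2 ->
  exists2 cs, {in cs, forall c, in_Gamma adj L c} & adj_path g1 cs g2.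
Proof.
move=> conn vL /in_GammaP[x vx ->] /in_GammaP[y vy ->].
case/connectP: (connect_LLG conn vx vy) => p; elim: p x vx => [|x1 p IH] x vx /=.
  move=> _ yx; subst y; exists [::] => //.
  have /is_edgeP[a [b [_ xE]]] := vy.
  have xa : x \in clique_verts a by rewrite inE vy xE set21.
  exact: (cyc_adjacent_component vL xa xa).
case/andP=> xx1 x1p last_p.
have [e /andP[xe x1e]] := LLG_clique xx1.
have vx1 : L2_vertex x1 by move: x1e; rewrite inE => /andP[].
have [cs csG cs_path] := IH x1 vx1 x1p last_p.
exists (component L x1 :: cs); last by split=> //; apply: cyc_adjacent_component xe x1e.
by move=> c; rewrite inE => /orP[/eqP->|/csG //]; apply/in_GammaP; exists x1.
Qed.

End CubicGraph.

Theorem proposition2p21 (V : finType) (adj : rel V)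
  (Hsimple : simple_graph adj) (Hconn : connected_graph adj)
  (Hbridge : bridgeless adj) (Htri : triangle_free adj) (Hcubic : cubic adj)
  (L : labeling V) (HL : valid adj L)
  (g1 g2 : subgraph V)
  (Hg1 : in_Gamma adj L g1) (Hg2 : in_Gamma adj L g2)
  (Hnadj : ~ cyc_adjacent adj g1 g2) :
  exists es : seq {set V},
    all (is_edge adj) es /\
    let L' := flips adj es L in
    [/\ in_Gamma adj L' g1, in_Gamma adj L' g2 &
        exists g3 : subgraph V,
          [/\ in_Gamma adj L' g3, cyc_adjacent adj g3 g1 & cyc_adjacent adj g3 g2]].
Proof.
have [adj_sym adj_irr] : symmetric adj /\ irreflexive adj.
  by case: Hsimple => sym irr; split=> // u; apply/negbTE.
have [cs csG cs_path] := adj_path_exists adj_sym adj_irr Htri Hcubic Hconn HL Hg1 Hg2.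
exact: (joinable_of_adj_path adj_sym adj_irr Htri Hcubic HL Hg1 Hg2 csG Hnadj cs_path).
Qed.
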